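(* Let $G_1,G_2$ be cubic graphs. Every proper $3$-edge coloring $f$ of $G=G_1\,Y\,G_2$ (respectively $G=G_1\,H\,G_2$) can be written as $c_1\,Y\,d_1$ (respectively $c_1\,H\,d_1$), where $c_1$ is some proper $3$-edge coloring of $G_1$ and $d_1$ is some proper $3$-edge coloring of $G_2$.
   Context: Graphs are finite; multiple edges allowed, loops not. Proper $3$-edge colorings use colors $\{1,2,3\}$, adjacent edges receiving different colors. Composition Y: choose $v_1\in G_1$ with incident edges $x_j=v_1s_{1j}$ and $v_2\in G_2$ with incident edges $y_j=v_2s_{2j}$ ($j=1,2,3$); $G_1\,Y\,G_2$ deletes $v_1,v_2$ and adds edges $s_{1j}s_{2j}$ (the edge obtained by identifying $x_j$ with $y_j$). Composition H: choose edges $x=s_{11}s_{12}\in G_1$, $y=s_{21}s_{22}\in G_2$; $G_1\,H\,G_2$ deletes $x,y$ and adds $s_{11}s_{21},s_{12}s_{22}$. For proper $3$-edge colorings $c$ of $G_1$ and $d$ of $G_2$: let $\hat d$ be a coloring of $G_2$ obtained from $d$ by a global permutation of colors such that $\hat d(y_j)=c(x_j)$ for $j=1,2,3$; then $c\,Y\,d$ colors edges of $G_1-v_1$ by $c$, edges of $G_2-v_2$ by $\hat d$, and the edge $s_{1j}s_{2j}$ by $c(x_j)=\hat d(y_j)$. Similarly let $\tilde d$ be obtained from $d$ by a global color permutation with $\tilde d(y)=c(x)$; then $c\,H\,d$ colors edges of $G_1-x$ by $c$, edges of $G_2-y$ by $\tilde d$, and both new edges by $c(x)=\tilde d(y)$.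 *)

From HB Require Import structures.
From mathcomp Require Import all_boot all_order all_fingroup.
Set Implicit Arguments. Unset Strict Implicit. Unset Printing Implicit Defensive.

(* A finite multigraph: finite vertex type, finite edge type, and for each
   edge its (ordered) pair of endpoints.  Parallel edges are allowed;
   loops are excluded by the predicate [loopless]. *)
Record graph := Graph { gV : finType; gE : finType; gends : gE -> gV * gV }.

Definition inc (G : graph) (e : gE G) (v : gV G) : bool :=
  ((gends e).1 == v) || ((gends e).2 == v).

Definition loopless (G : graph) : Prop := forall e : gE G, (gends e).1 != (gends e).2.

Definition cubic (G : graph) : Prop :=
  loopless G /\ forall v : gV G, #|[set e : gE G | inc e v]| = 3.

Definition ends_are (G : graph) (e : gE G) (a b : gV G) : Prop :=
  gends e = (a, b) \/ gends e = (b, a).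

Definition adjacent (G : graph) (e e' : gE G) : Prop :=
  exists v : gV G, inc e v && inc e' v.

(* 3-edge colorings; the colors {1,2,3} are represented by 'I_3 *)
Definition coloring (G : graph) := gE G -> 'I_3.

Definition proper_coloring (G : graph) (c : coloring G) : Prop :=
  forall e e' : gE G, e != e' -> adjacent e e' -> c e != c e'.

Lemma ends1_avoid (G : graph) (v : gV G) (e : {e : gE G | ~~ inc e v}) :
  (gends (val e)).1 != v.
Proof. by case: e => e /=; rewrite /inc negb_or => /andP[]. Qed.

Lemma ends2_avoid (G : graph) (v : gV G) (e : {e : gE G | ~~ inc e v}) :
  (gends (val e)).2 != v.
Proof. by case: e => e /=; rewrite /inc negb_or => /andP[]. Qed.

(* Data: v1 in G1 with incident edges x j = v1 s1j, v2 in G2 with incident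
   edges y j = v2 s2j.  The s_ij are given as vertices different from v_i. *)
Section Ycomp.
Variables (G1 G2 : graph) (v1 : gV G1) (v2 : gV G2).
Variables (s1 : 'I_3 -> {u : gV G1 | u != v1}) (s2 : 'I_3 -> {u : gV G2 | u != v2}).

Definition YV : finType := ({u : gV G1 | u != v1} + {u : gV G2 | u != v2})%type.
Definition YE : finType :=
  ({e : gE G1 | ~~ inc e v1} + {e : gE G2 | ~~ inc e v2} + 'I_3)%type.

Definition Yends (e : YE) : YV * YV :=
  match e with
  | inl (inl e) => (inl (exist (fun u => u != v1) _ (ends1_avoid e)),
                     inl (exist (fun u => u != v1) _ (ends2_avoid e)))
  | inl (inr e) => (inr (exist (fun u => u != v2) _ (ends1_avoid e)),
                     inr (exist (fun u => u != v2) _ (ends2_avoid e)))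
  | inr j => (inl (s1 j), inr (s2 j))
  end.

Definition Ycomp : graph := @Graph YV YE Yends.
End Ycomp.

Definition is_Ycol (G1 G2 : graph) (v1 : gV G1) (v2 : gV G2)
  (x : 'I_3 -> gE G1) (y : 'I_3 -> gE G2)
  (s1 : 'I_3 -> {u : gV G1 | u != v1}) (s2 : 'I_3 -> {u : gV G2 | u != v2})
  (f : coloring (Ycomp s1 s2)) (c : coloring G1) (d : coloring G2) : Prop :=
  exists p : {perm 'I_3},
    [/\ forall j, p (d (y j)) = c (x j),
        forall e : {e : gE G1 | ~~ inc e v1}, f (inl (inl e)) = c (val e),
        forall e : {e : gE G2 | ~~ inc e v2}, f (inl (inr e)) = p (d (val e)) &
        forall j, f (inr j) = c (x j)].

(* Data: edge x = s11 s12 in G1 and y = s21 s22 in G2; new edges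
   ord0 = s11 s21 and ord_max = s12 s22. *)
Section Hcomp.
Variables (G1 G2 : graph) (x : gE G1) (y : gE G2).
Variables (s11 s12 : gV G1) (s21 s22 : gV G2).

Definition HV : finType := (gV G1 + gV G2)%type.
Definition HE : finType := ({e : gE G1 | e != x} + {e : gE G2 | e != y} + 'I_2)%type.

Definition Hends (e : HE) : HV * HV :=
  match e with
  | inl (inl e) => (inl (gends (val e)).1, inl (gends (val e)).2)
  | inl (inr e) => (inr (gends (val e)).1, inr (gends (val e)).2)
  | inr j => if val j == 0 then (inl s11, inr s21) else (inl s12, inr s22)
  end.

Definition Hcomp : graph := @Graph HV HE Hends.
End Hcomp.

Definition is_Hcol (G1 G2 : graph) (x : gE G1) (y : gE G2)
  (s11 s12 : gV G1) (s21 s22 : gV G2)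
  (f : coloring (Hcomp x y s11 s12 s21 s22)) (c : coloring G1) (d : coloring G2) : Prop :=
  exists p : {perm 'I_3},
    [/\ p (d y) = c x,
        forall e : {e : gE G1 | e != x}, f (inl (inl e)) = c (val e),
        forall e : {e : gE G2 | e != y}, f (inl (inr e)) = p (d (val e)) &
        forall j, f (inr j) = c x].

(* Pull a proper colouring f of the composition back to G1 (and likewise to G2):
   edges of G1 - v1 keep their colour and x_j receives the colour of the new edge
   s1j s2j (for H, x receives the colour of s11 s21).  The result is proper at
   every vertex except possibly v1 (for H, s12), and in a cubic graph this forces
   properness at the last vertex too by parity: each colour class is a perfect
   matching of V - v, so |V| - 1 + n_a is even for every colour a, where n_a
   counts the a-coloured edges at v; since the n_a sum to 3, each is 1.  For H the
   same count at s12 shows that s12 s22 has the colour of x, so both composite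
   colourings use the identity as colour permutation. *)

From HB Require Import structures.
From mathcomp Require Import all_boot all_order all_fingroup.
From mathcomp Require Import zify.
Set Implicit Arguments. Unset Strict Implicit. Unset Printing Implicit Defensive.

Lemma sum_nat_boolE (T : finType) (P Q : pred T) :
  \sum_(x | P x) (Q x : nat) = #|[set x | P x & Q x]|.
Proof. by rewrite -sum1dep_card big_mkcondr; apply: eq_bigr => x _; case: (Q x). Qed.

Section ProperAt.
Variable G : graph.
Implicit Types (c : coloring G) (v w : gV G) (e : gE G).

Definition proper_at c w : Prop :=
  forall e e', e != e' -> inc e w -> inc e' w -> c e != c e'.

Lemma proper_coloringP c : proper_coloring c <-> forall w, proper_at c w.
Proof.
split=> [hc w e e' ne he he' | hc e e' ne [w /andP[he he']]]; last exact: (hc w).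
by apply: hc => //; exists w; rewrite he he'.
Qed.

Lemma proper_at_surj c w : #|[set e | inc e w]| = 3 -> proper_at c w ->
  forall a, exists2 e, inc e w & c e = a.
Proof.
move=> deg3 hc a.
have c_inj : {in [set e | inc e w] &, injective c}.
  move=> e e'; rewrite !inE => he he' ce; apply/eqP/negPn/negP => ne.
  by move: (hc _ _ ne he he'); rewrite ce eqxx.
have /setP/(_ a) : c @: [set e | inc e w] = [set: 'I_3].
  by apply/eqP; rewrite eqEcard subsetT cardsT card_ord card_in_imset ?deg3.
by rewrite inE => /imsetP[e]; rewrite inE => he ->; exists e.
Qed.

Lemma proper_at_color_class c w : #|[set e | inc e w]| = 3 -> proper_at c w ->
  forall a, #|[set e | inc e w & c e == a]| = 1.
Proof.
move=> deg3 hc a; have [e he <-] := proper_at_surj deg3 hc a.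
rewrite -[RHS](cards1 e); apply: eq_card => e'; rewrite !inE.
apply/andP/eqP => [[he' /eqP ce] | ->]; last by rewrite he.
by apply/eqP/negPn/negP => ne; move: (hc _ _ ne he' he); rewrite ce eqxx.
Qed.

Lemma sum_eq_nat (T : finType) (u : T) : \sum_w ((u == w) : nat) = 1.
Proof. by rewrite (bigD1 u) //= eqxx big1 // => w; rewrite eq_sym => /negbTE ->. Qed.

Lemma sum_inc_loopless : loopless G -> forall e, \sum_w (inc e w : nat) = 2.
Proof.
move=> noloop e; have ends_neq := noloop e.
rewrite -[2]/(1 + 1) -{1}(sum_eq_nat (gends e).1) -(sum_eq_nat (gends e).2) -big_split.
apply: eq_bigr => w _; rewrite /inc.
case: (gends e) ends_neq => a b /=.
by case: (a =P w) => [->|_]; case: (b =P w) => [->|_]; rewrite ?eqxx.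
Qed.

Section Parity.
Variables (c : coloring G) (v : gV G).
Hypotheses (cubicG : cubic G) (proper_off_v : forall w, w != v -> proper_at c w).

Lemma color_class_parity a :
  #|[set w | w != v]| + #|[set e | inc e v & c e == a]| = 2 * #|[set e | c e == a]|.
Proof.
(* Double count the pairs (w, e) with w != v an endpoint of an a-coloured edge e. *)
have [noloop deg3] := cubicG.
have off_v : \sum_(w | w != v) \sum_(e | c e == a) (inc e w : nat) = #|[set w | w != v]|.
  rewrite -sum1dep_card; apply: eq_bigr => w hw.
  rewrite sum_nat_boolE -[RHS](proper_at_color_class (deg3 w) (proper_off_v hw) a).
  by apply: eq_card => e; rewrite !inE andbC.
have at_v : #|[set e | inc e v & c e == a]| = \sum_(e | c e == a) (inc e v : nat).
  by rewrite sum_nat_boolE; apply: eq_card => e; rewrite !inE andbC.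
rewrite -off_v at_v exchange_big /= -big_split -sum1dep_card big_distrr /=.
apply: eq_bigr => e _.
by rewrite muln1 -(sum_inc_loopless noloop e) [RHS](bigD1 v) //= addnC.
Qed.

Lemma proper_at_remaining : proper_at c v.
Proof.
have [_ deg3] := cubicG.
pose n a := #|[set e | inc e v & c e == a]|.
have sum_n : \sum_(a < 3) n a = 3.
  rewrite -[RHS](deg3 v) -sum1dep_card -(eq_bigr _ (fun e _ => sum_eq_nat (c e))).
  rewrite exchange_big /=; apply: eq_bigr => a _; rewrite /n -sum_nat_boolE.
  by apply: eq_bigr => e _; rewrite eq_sym.
have n1 a : n a = 1.
  move: sum_n; rewrite !big_ord_recl big_ord0 addn0.
  move: (color_class_parity ord0) (color_class_parity (lift ord0 ord0))
    (color_class_parity (lift ord0 (lift ord0 ord0))) (color_class_parity a).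
  have : [\/ a = ord0, a = lift ord0 ord0 | a = lift ord0 (lift ord0 ord0)].
    by case: a => [[|[|[|//]]] ha]; [constructor 1 | constructor 2 | constructor 3];
      apply: val_inj.
  by rewrite /n; case=> ->; lia.
move=> e e' ne he he'; apply/negP => /eqP ce.
have := n1 (c e); rewrite /n => class1.
have : #|[set e; e']| <= 1.
  rewrite -class1; apply/subset_leq_card/subsetP => z; rewrite !inE.
  by case/orP => /eqP ->; rewrite ?he ?he' ?ce eqxx.
by rewrite cards2 ne.
Qed.

End Parity.
End ProperAt.

Lemma proper_coloring_pullback (G G' : graph) (phi : gE G -> gE G') (f : coloring G')
    (v : gV G) :
  cubic G -> injective phi -> proper_coloring f ->
  (forall w, w != v -> exists w' : gV G', forall e, inc e w -> inc (phi e) w') ->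
  proper_coloring (fun e => f (phi e)).
Proof.
move=> cubicG phi_inj /proper_coloringP f_proper phi_inc.
have proper_off_v w : w != v -> proper_at (fun e => f (phi e)) w.
  move=> /phi_inc[w' inc_w'] e e' ne he he'.
  by apply: (f_proper w'); [rewrite (inj_eq phi_inj) | apply: inc_w' | apply: inc_w'].
apply/proper_coloringP => w; have [-> | /proper_off_v //] := eqVneq w v.
exact: proper_at_remaining.
Qed.

Section ExtendAlongSubtype.
Variables (E : finType) (T : Type) (P : pred E).
Variables (inside : {e | P e} -> T) (outside : E -> T).

Definition extend (e : E) : T := if insub e is Some u then inside u else outside e.

Lemma extend_val u : extend (val u) = inside u.
Proof. by rewrite /extend valK. Qed.

Lemma extend_out e : ~~ P e -> extend e = outside e.
Proof. by move=> he; rewrite /extend insubF // (negbTE he). Qed.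

Lemma extend_inj :
  injective inside -> {in [predC P] &, injective outside} ->
  (forall u e, ~~ P e -> inside u <> outside e) -> injective extend.
Proof.
move=> in_inj out_inj disj e e'; rewrite /extend.
case: insubP => [u _ <- | he]; case: insubP => [u' _ <- | he'].
- by move/in_inj ->.
- by move/(disj _ _ he').
- by move/esym/(disj _ _ he).
- by apply: out_inj; rewrite inE.
Qed.

End ExtendAlongSubtype.

Lemma ends_are_other (G : graph) (e : gE G) (v s w : gV G) :
  ends_are e v s -> w != v -> inc e w -> s = w.
Proof.
by rewrite /inc => -[] -> /negbTE wv /=; rewrite ![_ == w]eq_sym wv ?orbF => /eqP.
Qed.

Section YSide.
Variables (G : graph) (v : gV G) (x : 'I_3 -> gE G).
Hypotheses (x_inj : injective x) (inc_v : forall e, inc e v <-> exists j, e = x j).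

Definition edge_index (e : gE G) : 'I_3 := odflt ord0 [pick j | x j == e].

Lemma edge_indexK : cancel x edge_index.
Proof.
by move=> j; rewrite /edge_index; case: pickP => [k /eqP/x_inj | /(_ j)]; rewrite ?eqxx.
Qed.

Definition Yside (T : Type) (g : {e | ~~ inc e v} -> T) : gE G -> T + 'I_3 :=
  extend (fun u => inl (g u)) (fun e => inr (edge_index e)).

Lemma Yside_x T (g : {e | ~~ inc e v} -> T) j : Yside g (x j) = inr j.
Proof. by rewrite /Yside extend_out ?edge_indexK ?negbK //; apply/inc_v; exists j. Qed.

Lemma Yside_inj T (g : {e | ~~ inc e v} -> T) : injective g -> injective (Yside g).
Proof.
move=> g_inj; apply: extend_inj => [u u' [/g_inj] // | e e' | //].
rewrite !inE !negbK => /inc_v[j ->] /inc_v[j' ->] [].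
by rewrite !edge_indexK => ->.
Qed.

End YSide.

Section YComposition.
Variables (G1 G2 : graph) (v1 : gV G1) (v2 : gV G2).
Variables (x : 'I_3 -> gE G1) (y : 'I_3 -> gE G2).
Variables (s1 : 'I_3 -> {u : gV G1 | u != v1}) (s2 : 'I_3 -> {u : gV G2 | u != v2}).
Hypotheses (x_inj : injective x) (y_inj : injective y).
Hypotheses (inc_v1 : forall e, inc e v1 <-> exists j, e = x j)
  (inc_v2 : forall e, inc e v2 <-> exists j, e = y j).
Hypotheses (ends_x : forall j, ends_are (x j) v1 (val (s1 j)))
  (ends_y : forall j, ends_are (y j) v2 (val (s2 j))).

Definition Yedge1 : gE G1 -> gE (Ycomp s1 s2) := Yside x inl.
Definition Yedge2 : gE G2 -> gE (Ycomp s1 s2) := Yside y inr.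

Lemma Yedge1_inc w (hw : w != v1) e :
  inc e w -> @inc (Ycomp s1 s2) (Yedge1 e) (inl (exist _ w hw)).
Proof.
have [/inc_v1[j ->] he | hv he] := boolP (inc e v1).
  rewrite /Yedge1 Yside_x // /inc /=; apply/orP; left.
  by rewrite (inj_eq inl_inj) -val_eqE /= (ends_are_other (ends_x j) hw he).
pose u : {e | ~~ inc e v1} := exist _ e hv.
by rewrite -[e]/(val u) /Yedge1 /Yside extend_val /inc /= !(inj_eq inl_inj) -!val_eqE.
Qed.

Lemma Yedge2_inc w (hw : w != v2) e :
  inc e w -> @inc (Ycomp s1 s2) (Yedge2 e) (inr (exist _ w hw)).
Proof.
have [/inc_v2[j ->] he | hv he] := boolP (inc e v2).
  rewrite /Yedge2 Yside_x // /inc /=.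
  by rewrite (inj_eq inr_inj) -val_eqE /= (ends_are_other (ends_y j) hw he).
pose u : {e | ~~ inc e v2} := exist _ e hv.
by rewrite -[e]/(val u) /Yedge2 /Yside extend_val /inc /= !(inj_eq inr_inj) -!val_eqE.
Qed.

Lemma Ycomp_coloring_split : cubic G1 -> cubic G2 ->
  forall f : coloring (Ycomp s1 s2), proper_coloring f ->
  exists (c1 : coloring G1) (d1 : coloring G2),
    [/\ proper_coloring c1, proper_coloring d1 & is_Ycol x y f c1 d1].
Proof.
move=> cubic1 cubic2 f f_proper.
exists (fun e => f (Yedge1 e)), (fun e => f (Yedge2 e)); split.
- apply: (proper_coloring_pullback (v := v1)) => //; first exact: Yside_inj inl_inj.
  by move=> w hw; exists (inl (exist _ w hw)); apply: Yedge1_inc.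
- apply: (proper_coloring_pullback (v := v2)) => //; first exact: Yside_inj inr_inj.
  by move=> w hw; exists (inr (exist _ w hw)); apply: Yedge2_inc.
by exists 1%g; split=> *; rewrite ?perm1 /Yedge1 /Yedge2 ?Yside_x ?/Yside ?extend_val.
Qed.

End YComposition.

Lemma ends_areC (G : graph) (e : gE G) (a b : gV G) : ends_are e a b -> ends_are e b a.
Proof. by case=> ?; [right | left]. Qed.

Section HSide.
Variables (G : graph) (x : gE G).

Definition Hside (T : Type) (g : {e | e != x} -> T) : gE G -> T + 'I_2 :=
  extend (fun u => inl (g u)) (fun _ => inr ord0).

Lemma Hside_x T (g : {e | e != x} -> T) : Hside g x = inr ord0.
Proof. by rewrite /Hside extend_out ?eqxx. Qed.

Lemma Hside_inj T (g : {e | e != x} -> T) : injective g -> injective (Hside g).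
Proof.
move=> g_inj; apply: extend_inj => [u u' [/g_inj] // | e e' | //].
by rewrite !inE !negbK => /eqP-> /eqP->.
Qed.

End HSide.

Section HComposition.
Variables (G1 G2 : graph) (x : gE G1) (y : gE G2) (s11 s12 : gV G1) (s21 s22 : gV G2).
Hypotheses (ends_x : ends_are x s11 s12) (ends_y : ends_are y s21 s22).

Let H := Hcomp x y s11 s12 s21 s22.
Definition Hedge1 : gE G1 -> gE H := Hside (x := x) inl.
Definition Hedge2 : gE G2 -> gE H := Hside (x := y) inr.

Lemma Hedge1_inc w e : w != s12 -> inc e w -> @inc H (Hedge1 e) (inl w).
Proof.
move=> hw he; have [ex | hx] := eqVneq e x.
  rewrite /Hedge1 ex Hside_x /inc /=; apply/orP; left.
  by rewrite (inj_eq inl_inj) (ends_are_other (ends_areC ends_x) hw) -?ex.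
pose u : {e | e != x} := exist _ e hx.
by rewrite -[e]/(val u) /Hedge1 /Hside extend_val /inc /= !(inj_eq inl_inj).
Qed.

Lemma Hedge2_inc w e : w != s22 -> inc e w -> @inc H (Hedge2 e) (inr w).
Proof.
move=> hw he; have [ey | hy] := eqVneq e y.
  rewrite /Hedge2 ey Hside_x /inc /=.
  by rewrite (inj_eq inr_inj) (ends_are_other (ends_areC ends_y) hw) -?ey.
pose u : {e | e != y} := exist _ e hy.
by rewrite -[e]/(val u) /Hedge2 /Hside extend_val /inc /= !(inj_eq inr_inj).
Qed.

Lemma Hcomp_coloring_split : cubic G1 -> cubic G2 ->
  forall f : coloring H, proper_coloring f ->
  exists (c1 : coloring G1) (d1 : coloring G2),
    [/\ proper_coloring c1, proper_coloring d1 & is_Hcol f c1 d1].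
Proof.
move=> cubic1 cubic2 f f_proper.
pose c1 e := f (Hedge1 e).
have c1_proper : proper_coloring c1.
  apply: (proper_coloring_pullback (v := s12)) => //; first exact: Hside_inj inl_inj.
  by move=> w hw; exists (inl w) => e; apply: Hedge1_inc.
have last_edge : f (inr ord_max) = c1 x.
  have [_ deg3] := cubic1.
  have c1_at_s12 := proj1 (proper_coloringP c1) c1_proper s12.
  have [e he ce] := proper_at_surj (deg3 s12) c1_at_s12 (f (inr ord_max)).
  have [ex | hx] := eqVneq e x; first by rewrite -ce ex.
  have : c1 e != f (inr ord_max).
    pose u : {e | e != x} := exist _ e hx.
    rewrite -[e]/(val u) /c1 /Hedge1 /Hside extend_val; apply: f_proper => //.
    by exists (inl s12); rewrite /inc /= !(inj_eq inl_inj) eqxx andbT.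
  by rewrite ce eqxx.
have new_edges j : f (inr j) = c1 x.
  case: j => [[|[|//]] hj]; [rewrite /c1 /Hedge1 Hside_x | rewrite -last_edge];
    by congr (f (inr _)); apply: val_inj.
exists c1, (fun e => f (Hedge2 e)); split=> //.
  apply: (proper_coloring_pullback (v := s22)) => //; first exact: Hside_inj inr_inj.
  by move=> w hw; exists (inr w) => e; apply: Hedge2_inc.
by exists 1%g; split=> [|u|u|//];
  rewrite ?perm1 /c1 /Hedge1 /Hedge2 ?Hside_x ?/Hside ?extend_val.
Qed.

End HComposition.

Theorem theorem8 :
  (* Composition Y *)
  (forall (G1 G2 : graph), cubic G1 -> cubic G2 ->
   forall (v1 : gV G1) (v2 : gV G2) (x : 'I_3 -> gE G1) (y : 'I_3 -> gE G2)
          (s1 : 'I_3 -> {u : gV G1 | u != v1}) (s2 : 'I_3 -> {u : gV G2 | u != v2}),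
     injective x -> injective y ->
     (forall e : gE G1, inc e v1 <-> exists j, e = x j) ->
     (forall e : gE G2, inc e v2 <-> exists j, e = y j) ->
     (forall j, ends_are (x j) v1 (val (s1 j))) ->
     (forall j, ends_are (y j) v2 (val (s2 j))) ->
     forall f : coloring (Ycomp s1 s2), proper_coloring f ->
     exists (c1 : coloring G1) (d1 : coloring G2),
       [/\ proper_coloring c1, proper_coloring d1 & is_Ycol x y f c1 d1])
  /\
  (* Composition H *)
  (forall (G1 G2 : graph), cubic G1 -> cubic G2 ->
   forall (x : gE G1) (y : gE G2) (s11 s12 : gV G1) (s21 s22 : gV G2),
     ends_are x s11 s12 -> ends_are y s21 s22 ->
     forall f : coloring (Hcomp x y s11 s12 s21 s22), proper_coloring f ->
     exists (c1 : coloring G1) (d1 : coloring G2),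
       [/\ proper_coloring c1, proper_coloring d1 & is_Hcol f c1 d1]).
Proof.
by split=> *; [exact: Ycomp_coloring_split | exact: Hcomp_coloring_split].
Qed.
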